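(* In the modified multi-phase process described in the context, every element $x\in S^+_{3/4}$ that is considered by the process passes the preliminary test and all the following $\eta$ tests with probability at most $2^{-n}$.
   Context: Let $n\ge2$ be an integer such that $m=n/\log_2 n$ is an integer, and let $S'$ be a set of $m$ distinct elements of a totally ordered set. For $\rho\in(0,1]$, $S^-_\rho$ denotes the set of the $\lceil \rho m\rceil$ smallest elements of $S'$ and $S^+_\rho=S'\setminus S^-_\rho$. There are two oracles $\mathcal{O}_1,\mathcal{O}_2$ which can be queried with an element $x\in S'$ and answer ''relevant'' or ''not relevant'' in constant time, all answers being mutually independent; for constants $p_1,p_2\in[0,\tfrac12)$: $\mathcal{O}_1$ reports $x$ relevant with probability at least $1-p_1$ if $x\in S^-_{1/6}$ and at most $p_1$ if $x\in S^+_{1/3}$; $\mathcal{O}_2$ reports $x$ relevant with probability at least $1-p_2$ if $x\in S^-_{1/3}$ and at most $p_2$ if $x\in S^+_{3/4}$. For $q\in[0,\tfrac12)$ let $c_q=\lceil 4(1-q)/(1-2q)^2\rceil$. Let $\eta = 1+\lceil \log_2 \frac{n}{\log_2 n}\rceil$. Modified multi-phase process: the elements of $S'$ are considered one at a time. For the current element $x$, a preliminary test is performed consisting of $8c_{p_1}\lceil \ln n\rceil+1$ queries to $\mathcal{O}_1$ on $x$; it is passed if the majority report $x$ relevant, otherwise $x$ is discarded and the next element is considered. Then, for $i=1,\dots,\eta$, the $i$-th test consists of $2\lceil 2^i\ln n\rceil c_{p_2}+1$ queries to $\mathcal{O}_2$ on $x$ and is passed if the majority report $x$ relevant; if $x$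 fails a test it is discarded and the next element is considered. The process returns the first element that passes the $\eta$-th test. Here $\ln$ is the natural logarithm. *)

From mathcomp Require Import all_boot all_order all_algebra.
From mathcomp Require Import all_classical all_reals all_analysis.
Set Implicit Arguments. Unset Strict Implicit. Unset Printing Implicit Defensive.
Import Order.TTheory GRing.Theory Num.Theory.
Local Open Scope ring_scope.

Definition ceilN {R : realType} (x : R) : nat := `|Num.ceil x|%N.

(* S^-_rho for rho = a/b : the ceil(a m / b) smallest elements of S' (m = size S') *)
Definition S_minus {d} {T : orderType d} (a b : nat) (S' : seq T) : seq T :=
  take ((a * size S' + b - 1) %/ b)%N (sort (@Order.le d T) S').

Definition S_plus {d} {T : orderType d} (a b : nat) (S' : seq T) : seq T :=
  [seq y <- S' | y \notin S_minus a b S'].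

Definition log2 {R : realType} (x : R) : R := ln x / ln 2.

Definition c_ {R : realType} (q : R) : nat := ceilN (4 * (1 - q) / (1 - 2 * q) ^+ 2).

Definition eta_ {R : realType} (n : nat) : nat :=
  (1 + ceilN (log2 (n%:R / log2 (n%:R : R))))%N.

(* sizes of the successive tests applied to an element:
   block 0 = preliminary test (8 c_{p1} ceil(ln n) + 1 queries to O1),
   block i (1 <= i <= eta) = i-th test (2 ceil(2^i ln n) c_{p2} + 1 queries to O2) *)
Definition test_sizes {R : realType} (n : nat) (p1 p2 : R) : seq nat :=
  (8 * c_ p1 * ceilN (ln (n%:R : R)) + 1)%N ::
  [seq (2 * ceilN ((2 : R) ^+ i * ln (n%:R : R)) * c_ p2 + 1)%N | i <- iota 1 (eta_ (R := R) n)].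

Definition block_of (s : seq nat) (j : nat) : nat :=
  find (fun i => (j < sumn (take i.+1 s))%N) (iota 0 (size s)).

(* the element passes every test: in each block, a strict majority of answers is "relevant" *)
Definition passes_all (s : seq nat) (w : {ffun 'I_(sumn s) -> bool}) : bool :=
  [forall i : 'I_(size s),
     (nth 0 s i < 2 * \sum_(j < sumn s | block_of s j == i) (w j : nat))%N].

(* probability (independent answers) that an element whose O1-answers are "relevant"
   with probability r1 and whose O2-answers are "relevant" with probability r2
   passes the preliminary test and all eta following tests *)
Definition prob_pass_all {R : realType} (n : nat) (p1 p2 r1 r2 : R) : R :=
  let s := test_sizes n p1 p2 in
  \sum_(w : {ffun 'I_(sumn s) -> bool} | passes_all w)
     \prod_(j < sumn s)
        (let r := if block_of s j == 0%N then r1 else r2 in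
         if w j then r else 1 - r).

From Pilot Require Import Defs.
From mathcomp Require Import all_boot all_order all_algebra.
From mathcomp Require Import all_classical all_reals all_analysis.
From mathcomp Require Import zify lra.
Import Order.TTheory GRing.Theory Num.Theory.
Local Open Scope ring_scope.

(* Discarding all but the last test only increases the probability, so it is
   enough to bound the chance that an element with answer probability
   r <= p2 < 1/2 wins a strict majority among the N = 2 K c + 1 answers of
   the eta-th test, where K = ceil (2^eta ln n) and c = c_{p2}.  This is a
   Chernoff bound: tilting every "relevant" answer by a = 2 - 2 p2 and every
   other one by 1/a makes the weight of a winning outcome at least 1, while
   the total tilted mass factorises into N factors
   r a + (1 - r)/a <= 1 - (1 - 2 p2)^2/2 <= exp (-(1 - 2 p2)^2/2).
   The choice of c makes c (1 - 2 p2)^2 >= 2 and the choice of eta makes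
   K >= 2 n ln 2, whence the bound exp (- n ln 2). *)

Lemma sumn_take_leq (s : seq nat) {k k' : nat} : (k <= k')%N ->
  (sumn (take k s) <= sumn (take k' s))%N.
Proof.
elim: s k k' => [|x s IH] [|k] [|k'] //=; try lia.
by move=> k_le; have := IH k k' k_le; lia.
Qed.

Lemma sumn_takeS (s : seq nat) i : (i < size s)%N ->
  sumn (take i.+1 s) = (sumn (take i s) + nth 0%N s i)%N.
Proof.
elim: s i => [|x s IH] [|i] //= i_lt; first by rewrite take0 /=; lia.
by rewrite IH //; lia.
Qed.

Lemma block_ofE (s : seq nat) (i j : nat) : (i < size s)%N ->
  (block_of s j == i) = (sumn (take i s) <= j < sumn (take i.+1 s))%N.
Proof.
move=> i_lt; rewrite /block_of.
set P := fun k => (j < sumn (take k.+1 s))%N.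
have nth_iota0 k : (k < size s)%N -> nth 0%N (iota 0 (size s)) k = k.
  by move=> k_lt; rewrite nth_iota.
have P_find : has P (iota 0 (size s)) -> P (find P (iota 0 (size s))).
  move=> hasP; have := nth_find 0%N hasP; rewrite nth_iota0 //.
  by move: hasP; rewrite has_find size_iota.
have notP_before k : (k < find P (iota 0 (size s)))%N -> ~~ P k.
  move=> lt_find; have k_lt : (k < size s)%N.
    by apply: leq_trans lt_find _; rewrite -{2}(size_iota 0 (size s)) find_size.
  by rewrite -(nth_iota0 k k_lt) (before_find _ lt_find).
apply/eqP/idP => [find_i | /andP[j_ge j_lt]].
- have hasP : has P (iota 0 (size s)) by rewrite has_find size_iota find_i.
  have := P_find hasP; rewrite find_i /P => ->; rewrite andbT.
  case: i find_i i_lt => [|i] find_i _; first by rewrite take0.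
  by have := notP_before i; rewrite find_i ltnSn /P -leqNgt => ->.
- have hasP : has P (iota 0 (size s)).
    by apply/hasP; exists i; rewrite ?mem_iota.
  apply/eqP; rewrite eqn_leq; apply/andP.
  split; rewrite leqNgt; apply/negP => lt_find.
  + by have := notP_before i lt_find; rewrite /P j_lt.
  + have := P_find hasP; move: lt_find; set f := find P _; rewrite /P.
    by move=> /(sumn_take_leq s); lia.
Qed.

Lemma sum1_nat_interval (N a b : nat) :
  (\sum_(0 <= j < N | (a <= j < b)%N) 1 = minn N b - minn N a)%N.
Proof.
elim: N => [|N IH]; first by rewrite big_geq //; lia.
by rewrite big_mkcond big_nat_recr //= -big_mkcond IH; case: ifP; lia.
Qed.

Lemma card_block_of (s : seq nat) (i : nat) : (i < size s)%N ->
  #|(fun j : 'I_(sumn s) => block_of s j == i)| = nth 0%N s i.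
Proof.
move=> i_lt; rewrite -sum1_card.
rewrite (eq_bigl (fun j : 'I_(sumn s) =>
  (sumn (take i s) <= j < sumn (take i.+1 s))%N)); last first.
  by move=> j; rewrite unfold_in block_ofE.
rewrite -(big_mkord (fun j => (sumn (take i s) <= j < sumn (take i.+1 s))%N)
  (fun _ => 1%N)).
rewrite sum1_nat_interval sumn_takeS //.
by have := sumn_take_leq s i_lt; rewrite take_size sumn_takeS //; lia.
Qed.

Section MajorityTail.

Context {R : realType} {N : nat} (B : pred 'I_N).

Definition majority_tilt (a : R) (j : 'I_N) (b : bool) : R :=
  if B j then (if b then a else a^-1) else 1.

Lemma majority_tilt_ge1 (a : R) (w : {ffun 'I_N -> bool}) : 1 <= a ->
  (#|B| < 2 * \sum_(j | B j) (w j : nat))%N ->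
  1 <= \prod_j majority_tilt a j (w j).
Proof.
move=> a_ge1 majority; have a_gt0 : 0 < a by lra.
rewrite /majority_tilt -big_mkcond /=.
rewrite (eq_bigr (fun j => a^-1 * (a ^+ 2) ^+ (w j : nat))); last first.
  move=> j _; case: (w j); rewrite /= ?expr0 ?mulr1 // expr1 expr2.
  by rewrite mulrA mulVf ?mul1r ?gt_eqF.
rewrite big_split /= prodrXr -exprM prodr_const.
have -> : #|[pred j | B j]| = #|B| by apply: eq_card.
apply: (le_trans (y := a^-1 ^+ #|B| * a ^+ #|B|)).
  by rewrite exprVn mulVf // expf_neq0 ?gt_eqF.
by rewrite ler_pM2l ?exprn_gt0 ?invr_gt0 // ler_weXn2l // ltnW.
Qed.

Lemma majority_tail_le (F : 'I_N -> bool -> R) (P : pred {ffun 'I_N -> bool})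
    (a q : R) :
  (forall j b, 0 <= F j b) -> 1 <= a ->
  (forall w, P w -> (#|B| < 2 * \sum_(j | B j) (w j : nat))%N) ->
  (forall j, ~~ B j -> F j true + F j false = 1) ->
  (forall j, B j -> F j true * a + F j false / a <= q) ->
  \sum_(w | P w) \prod_j F j (w j) <= q ^+ #|B|.
Proof.
move=> F_ge0 a_ge1 P_majority F_sum1 F_tilt_le; have a_gt0 : 0 < a by lra.
pose G := majority_tilt a.
have G_ge0 j b : 0 <= G j b.
  by rewrite /G /majority_tilt; case: (B j); case: b; rewrite ?invr_ge0; lra.
pose mass (w : {ffun 'I_N -> bool}) := \prod_j (F j (w j) * G j (w j)).
have mass_ge0 w : 0 <= mass w by apply: prodr_ge0 => j _; rewrite mulr_ge0.
apply: (le_trans (y := \sum_(w | P w) mass w)).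
  apply: ler_sum => w Pw; rewrite /mass big_split /= -{1}[\prod_j F j _]mulr1.
  rewrite ler_wpM2l ?majority_tilt_ge1 ?P_majority //.
  by apply: prodr_ge0 => j _.
apply: (le_trans (y := \sum_w mass w)).
  by rewrite [X in _ <= X](bigID P) /= lerDl sumr_ge0.
rewrite /mass -(bigA_distr_bigA (fun j b => F j b * G j b)) /=.
rewrite -prodr_const (big_mkcond (mem B)) /=.
apply: ler_prod => j _; rewrite big_bool /= /G /majority_tilt unfold_in.
case: ifP => Bj.
  rewrite F_tilt_le // andbT.
  by apply: addr_ge0; apply: mulr_ge0; rewrite ?F_ge0 ?invr_ge0 ?(ltW a_gt0).
by rewrite !mulr1 F_sum1 ?Bj // ler01 lexx.
Qed.

End MajorityTail.

(* [Defs.ceilN] is qualified because [Num.Theory.ceilN] is also in scope. *)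
Lemma ceilN_ge {R : realType} (y : R) : y <= (Defs.ceilN y)%:R.
Proof.
rewrite /Defs.ceilN natr_absz; apply: (le_trans (ceil_ge y)).
by rewrite ler_int ler_norm.
Qed.

Lemma le_exp2_ceilN_log2 {R : realType} (z : R) : 0 < z ->
  z <= 2 ^+ Defs.ceilN (log2 z).
Proof.
move=> z_gt0; have ln2_gt0 : 0 < ln (2:R) by rewrite ln_gt0 //; lra.
rewrite -ler_ln ?posrE ?exprn_gt0 // lnXn; last by lra.
by rewrite -[_ *+ _]mulr_natr mulrC -ler_pdivrMr // ceilN_ge.
Qed.

Lemma exp2_eta_ln_ge {R : realType} (n : nat) : (2 <= n)%N ->
  2 * n%:R * ln (2:R) <= (2:R) ^+ eta_ (R:=R) n * ln (n%:R : R).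
Proof.
move=> n_ge2.
have ln2_gt0 : 0 < ln (2:R) by rewrite ln_gt0 //; lra.
have n_ge2R : (2:R) <= n%:R by rewrite (ler_nat R 2 n).
have lnn_gt0 : 0 < ln (n%:R : R) by rewrite ln_gt0 //; lra.
have z_gt0 : 0 < n%:R / log2 (n%:R : R) by rewrite !divr_gt0 //; lra.
have := le_exp2_ceilN_log2 _ z_gt0; rewrite /eta_ exprD expr1 /log2.
set z := n%:R / (ln (n%:R : R) / ln 2) => z_le.
have z_lnn : z * ln (n%:R : R) = n%:R * ln 2.
  by rewrite /z invf_div mulrA divfK // gt_eqF.
by rewrite -mulrA -z_lnn mulrA ler_pM2r // ler_pM2l.
Qed.

Lemma tilted_answer_le {R : realType} (p r : R) :
  0 <= r -> r <= p -> p < 1/2 ->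
  r * (2 - 2 * p) + (1 - r) / (2 - 2 * p) <= 1 - (1 - 2 * p) ^+ 2 / 2.
Proof.
move=> r_ge0 r_le p_lt; have a_gt0 : 0 < 2 - 2 * p by lra.
rewrite -(ler_pM2r a_gt0) mulrDl divfK ?gt_eqF //.
have : 0 <= (p - r) * ((2 - 2 * p) ^+ 2 - 1).
  by rewrite mulr_ge0 ?subr_ge0 // expr2; nra.
by rewrite !expr2; nra.
Qed.

Lemma majority_rate_le_exp2N {R : realType} (p : R) (n K c : nat) :
  0 <= p -> p < 1/2 ->
  4 * (1 - p) / (1 - 2 * p) ^+ 2 <= c%:R ->
  2 * n%:R * ln (2:R) <= K%:R ->
  (1 - (1 - 2 * p) ^+ 2 / 2) ^+ (2 * K * c + 1) <= 2 ^- n.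
Proof.
move=> p_ge0 p_lt c_ge K_ge.
set u := (1 - 2 * p) ^+ 2.
have u_gt0 : 0 < u by rewrite exprn_gt0 //; lra.
have u_le1 : u <= 1 by rewrite /u expr2; nra.
have ln2_gt0 : 0 < ln (2:R) by rewrite ln_gt0 //; lra.
have cu_ge2 : 2 <= c%:R * u.
  rewrite -(ler_pdivrMr _ _ u_gt0); apply: le_trans c_ge.
  by rewrite ler_pM2r ?invr_gt0 //; lra.
apply: (le_trans (y := expR (- (u / 2)) ^+ (2 * K * c + 1))).
  apply: lerXn2r; rewrite ?nnegrE ?expR_ge0 //; first lra.
  by have := expR_ge1Dx (- (u / 2)); rewrite addrC.
rewrite -expRM_natl.
have -> : (2:R) ^- n = expR (- (n%:R * ln 2)).
  by rewrite expRN expRM_natl lnK // posrE.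
rewrite ler_expR mulrN lerN2 natrD !natrM.
have : 2 * n%:R * ln 2 * 2 <= K%:R * (c%:R * u).
  by apply: ler_pM; rewrite ?mulr_ge0 //; lra.
have : 0 <= n%:R * ln (2:R) by rewrite mulr_ge0 // ltW.
nra.
Qed.

Lemma size_test_sizes {R : realType} (n : nat) (p1 p2 : R) :
  size (test_sizes n p1 p2) = (eta_ (R:=R) n).+1.
Proof. by rewrite /test_sizes /= size_map size_iota. Qed.

Lemma nth_test_sizes_eta {R : realType} (n : nat) (p1 p2 : R) :
  nth 0%N (test_sizes n p1 p2) (eta_ (R:=R) n) =
  (2 * Defs.ceilN ((2 : R) ^+ eta_ (R:=R) n * ln (n%:R : R)) * c_ p2 + 1)%N.
Proof.
have : (0 < eta_ (R:=R) n)%N by rewrite /eta_ add1n.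
rewrite /test_sizes; case: (eta_ n) => // e _.
rewrite -[nth _ (_ :: _) _]/(nth 0%N (map _ (iota 1 e.+1)) e).
by rewrite (nth_map 0%N) ?size_iota // nth_iota // add1n.
Qed.

Theorem lemma15 (R : realType) (n m : nat) (d : Order.disp_t) (T : orderType d)
    (S' : seq T) (p1 p2 : R) (o1 o2 : T -> R) (x : T) :
  (2 <= n)%N ->
  m%:R = n%:R / log2 (n%:R : R) ->
  uniq S' -> size S' = m ->
  0 <= p1 < 1 / 2 -> 0 <= p2 < 1 / 2 ->
  (forall y, y \in S' -> 0 <= o1 y <= 1) ->
  (forall y, y \in S' -> 0 <= o2 y <= 1) ->
  (forall y, y \in S_minus 1 6 S' -> 1 - p1 <= o1 y) ->
  (forall y, y \in S_plus 1 3 S' -> o1 y <= p1) ->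
  (forall y, y \in S_minus 1 3 S' -> 1 - p2 <= o2 y) ->
  (forall y, y \in S_plus 3 4 S' -> o2 y <= p2) ->
  x \in S_plus 3 4 S' ->
  prob_pass_all n p1 p2 (o1 x) (o2 x) <= 2 ^- n.
Proof.
move=> n_ge2 _ _ _ _ /andP[p2_ge0 p2_lt] o1_01 o2_01 _ _ _ o2_small x_plus.
have xS : x \in S' by move: x_plus; rewrite mem_filter => /andP[].
have /andP[r1_ge0 r1_le1] := o1_01 x xS.
have /andP[r2_ge0 r2_le1] := o2_01 x xS.
set s := test_sizes n p1 p2; set e := eta_ (R:=R) n.
have e_lt : (e < size s)%N by rewrite size_test_sizes.
have e_neq0 : (e == 0%N) = false by rewrite /e /eta_ add1n.
pose r j := if block_of s j == 0%N then o1 x else o2 x.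
pose F j (b : bool) := if b then r j else 1 - r j.
apply: (le_trans (majority_tail_le (fun j => block_of s j == e) F
  (passes_all (s:=s)) (2 - 2 * p2) (1 - (1 - 2 * p2) ^+ 2 / 2) _ _ _ _ _)).
- by move=> j [|]; rewrite /F /r; case: ifP; rewrite ?subr_ge0.
- lra.
- by move=> w /forallP /(_ (Ordinal e_lt)); rewrite card_block_of.
- by move=> j _; rewrite addrC subrK.
- move=> j /eqP block_e; rewrite /F /r block_e e_neq0.
  exact: tilted_answer_le (o2_small x x_plus) p2_lt.
rewrite card_block_of // nth_test_sizes_eta.
apply: majority_rate_le_exp2N => //; first exact: ceilN_ge.
exact: le_trans (exp2_eta_ln_ge n n_ge2) (ceilN_ge _).
Qed.
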